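(* Let $n\in\mathbb{Z}\setminus\{0\}$, $c,d\in\mathbb{N}$, and $f:\mathbb{Z}\to\mathbb{C}$, and set $$\mathcal{T}_n(c,d)=\sum_{\substack{a,b\in\mathbb{Z}\setminus\{0\}\\ ad-bc=n}} f(bc),$$ the sum being zero if there are no such $a,b$. If $\gcd(c,d)\nmid n$ then $\mathcal{T}_n(c,d)=0$. If $\gcd(c,d)\mid n$ (and the series converge absolutely), then $$\mathcal{T}_n(c,d)=\sum_{m\in\mathbb{Z}} f\big((m+u_{c,d})\,v_{c,d}\big)-\delta_{c\mid n}\,f(-n)-\delta_{d\mid n}\,f(0).$$
   Context: For $c,d\in\mathbb{N}$ with $\gcd(c,d)\mid n$: $B=\{b\in\mathbb{Z}:\exists a\in\mathbb{Z},\ ad-bc=n\}$, $b^*$ is an element of $B$ of minimal absolute value, $u_{c,d}=b^*\gcd(c,d)/d$, and $v_{c,d}=cd/\gcd(c,d)$. (The value of $u_{c,d}$ depends on the choice of $b^*$ only up to an integer, which does not affect the sum over $m\in\mathbb{Z}$.) $\delta_{c\mid n}$ equals $1$ if $c$ divides $n$ and $0$ otherwise; similarly $\delta_{d\mid n}$. *)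

From Stdlib Require Import ZArith Znumtheory Reals Lra Lia List.
From Coquelicot Require Import Coquelicot.
Open Scope R_scope.

Definition lsum {I : Type} (g : I -> C) (l : list I) : C :=
  fold_right (fun i acc => Cplus (g i) acc) (RtoC 0) l.

Definition lsumR {I : Type} (g : I -> R) (l : list I) : R :=
  fold_right (fun i acc => g i + acc) 0 l.

Definition AbsSummable {I : Type} (g : I -> C) : Prop :=
  exists M : R, forall l : list I, NoDup l -> lsumR (fun i => Cmod (g i)) l <= M.

Definition HasSum {I : Type} (g : I -> C) (S : C) : Prop :=
  AbsSummable g /\
  forall eps : R, 0 < eps ->
    exists l0 : list I, forall l : list I, NoDup l -> incl l0 l ->
      Cmod (Cminus (lsum g l) S) < eps.

(* The family summed in T_n(c,d): indexed by pairs (a,b) in Z x Z, equal to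
   f(bc) when a,b are nonzero and ad - bc = n, and 0 otherwise (zero extension
   of the sum over the solution set). *)
Definition T_family (n c d : Z) (f : Z -> C) (p : Z * Z) : C :=
  let (a, b) := p in
  if (negb (a =? 0)%Z && negb (b =? 0)%Z && (a * d - b * c =? n)%Z)%bool
  then f (b * c)%Z else RtoC 0.

Definition in_B (n c d b : Z) : Prop := exists a : Z, (a * d - b * c)%Z = n.

Definition is_bstar (n c d bs : Z) : Prop :=
  in_B n c d bs /\ forall b, in_B n c d b -> (Z.abs bs <= Z.abs b)%Z.

Definition u_cd (c d bs : Z) : R := IZR bs * IZR (Z.gcd c d) / IZR d.

Definition v_cd (c d : Z) : Z := (c * d / Z.gcd c d)%Z.

(* The integer (m + u_{c,d}) v_{c,d}, written out: m v + b* c. *)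
Definition uv_arg (c d bs m : Z) : Z := (m * v_cd c d + bs * c)%Z.

Lemma uv_arg_spec (c d bs m : Z) : (0 < c)%Z -> (0 < d)%Z ->
  IZR (uv_arg c d bs m) = (IZR m + u_cd c d bs) * IZR (v_cd c d).
Proof.
  intros Hc Hd.
  unfold uv_arg, u_cd, v_cd.
  set (g := Z.gcd c d).
  assert (Hg : (0 < g)%Z).
  { unfold g. pose proof (Z.gcd_nonneg c d).
    destruct (Z.eq_dec (Z.gcd c d) 0) as [E|E]; [|lia].
    apply Z.gcd_eq_0 in E; lia. }
  destruct (Z.gcd_divide_l c d) as [k Hk]. fold g in Hk.
  assert (Hv : (c * d / g = k * d)%Z).
  { rewrite Hk. replace (k * g * d)%Z with (k * d * g)%Z by ring.
    apply Z.div_mul; lia. }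
  rewrite Hv. clearbody g. rewrite Hk.
  rewrite plus_IZR, !mult_IZR.
  assert (IZR g <> 0) by (apply not_0_IZR; lia).
  assert (IZR d <> 0) by (apply not_0_IZR; lia).
  field; auto.
Qed.

Definition M_family (c d bs : Z) (f : Z -> C) (m : Z) : C :=
  f (uv_arg c d bs m).

From Stdlib Require Import ZArith Znumtheory Reals Lra Lia List.
From Coquelicot Require Import Coquelicot.
Open Scope R_scope.

(* Since g = gcd(c,d) divides every a d - b c, there are no solutions unless
   g | n.  Otherwise, with c = c' g and d = d' g coprime after division, the
   solutions of a d - b c = n form the line (a0 + m c', b* + m d'), m in Z,
   and along it b c = m v + b* c = (m + u) v.  The constraints a <> 0 and
   b <> 0 each remove at most one m: a vanishes somewhere iff c | n, and then
   b c = -n there; b vanishes somewhere iff d | n, and then b c = 0 there. *)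

Lemma lsum_ext {I : Type} (g h : I -> C) l :
  (forall i, In i l -> g i = h i) -> lsum g l = lsum h l.
Proof. induction l; simpl; intros H; auto. rewrite H, IHl; auto. Qed.

Lemma lsumR_ext {I : Type} (g h : I -> R) l :
  (forall i, In i l -> g i = h i) -> lsumR g l = lsumR h l.
Proof. induction l; simpl; intros H; auto. rewrite H, IHl; auto. Qed.

Lemma lsumR_le {I : Type} (g h : I -> R) l :
  (forall i, g i <= h i) -> lsumR g l <= lsumR h l.
Proof. intros H. induction l; simpl; [lra|]. specialize (H a). lra. Qed.

Lemma lsum_map {I J : Type} (g : J -> C) (psi : I -> J) l :
  lsum g (map psi l) = lsum (fun i => g (psi i)) l.
Proof. induction l; simpl; congruence. Qed.

Lemma lsumR_map {I J : Type} (g : J -> R) (psi : I -> J) l :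
  lsumR g (map psi l) = lsumR (fun i => g (psi i)) l.
Proof. induction l; simpl; congruence. Qed.

Lemma lsum_filter {I : Type} (h : I -> C) (t : I -> bool) l :
  (forall i, t i = false -> h i = RtoC 0) -> lsum h l = lsum h (filter t l).
Proof.
  intros H. induction l; simpl; auto.
  destruct (t a) eqn:E; simpl; rewrite IHl; auto.
  rewrite H by auto. ring.
Qed.

Lemma lsumR_filter {I : Type} (h : I -> R) (t : I -> bool) l :
  (forall i, t i = false -> h i = 0) -> lsumR h l = lsumR h (filter t l).
Proof.
  intros H. induction l; simpl; auto.
  destruct (t a) eqn:E; simpl; rewrite IHl; auto.
  rewrite H by auto. ring.
Qed.

Lemma lsum_remove_point {I : Type} (g : I -> C) (p : I -> bool) i0 l :
  (forall i, p i = true <-> i = i0) -> NoDup l -> In i0 l ->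
  lsum (fun i => if p i then RtoC 0 else g i) l = Cminus (lsum g l) (g i0).
Proof.
  intros Hp. induction l as [|x l IH]; intros Hnd Hin; [destruct Hin|].
  inversion Hnd as [|? ? Hx Hl]; subst. simpl.
  destruct (p x) eqn:E.
  - apply Hp in E; subst x.
    rewrite (lsum_ext _ g).
    + ring.
    + intros i Hi. destruct (p i) eqn:Ei; auto.
      apply Hp in Ei; subst; contradiction.
  - destruct Hin as [->|Hin].
    + assert (p i0 = true) by (apply Hp; auto). congruence.
    + rewrite IH by auto. ring.
Qed.

Lemma HasSum_zero {I : Type} (g : I -> C) :
  (forall i, g i = RtoC 0) -> HasSum g (RtoC 0).
Proof.
  intros H. assert (Hl : forall l, lsum g l = RtoC 0).
  { induction l; simpl; auto. rewrite IHl, H. ring. }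
  split.
  - exists 0. intros l _. induction l; simpl; [lra|].
    rewrite H, Cmod_0. lra.
  - intros eps Heps. exists nil. intros l _ _.
    rewrite Hl. replace (Cminus (RtoC 0) (RtoC 0)) with (RtoC 0) by ring.
    rewrite Cmod_0. lra.
Qed.

Lemma HasSum_ext {I : Type} (g h : I -> C) S :
  (forall i, g i = h i) -> HasSum g S -> HasSum h S.
Proof.
  intros Hgh [[M HM] HS]. split.
  - exists M. intros l Hl. rewrite (lsumR_ext _ (fun i => Cmod (g i))).
    + auto.
    + intros i _. rewrite Hgh. reflexivity.
  - intros eps Heps. destruct (HS eps Heps) as [l0 Hl0]. exists l0.
    intros l Hl Hinc. rewrite (lsum_ext _ g) by auto. auto.
Qed.

Lemma HasSum_remove_point {I : Type} (g : I -> C) (p : I -> bool) i0 S :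
  (forall i, p i = true <-> i = i0) -> HasSum g S ->
  HasSum (fun i => if p i then RtoC 0 else g i) (Cminus S (g i0)).
Proof.
  intros Hp [[M HM] HS]. split.
  - exists M. intros l Hl. eapply Rle_trans; [|apply (HM l Hl)].
    apply lsumR_le. intros i. destruct (p i).
    + rewrite Cmod_0. apply Cmod_ge_0.
    + apply Rle_refl.
  - intros eps Heps. destruct (HS eps Heps) as [l0 Hl0]. exists (i0 :: l0).
    intros l Hl Hinc. rewrite (lsum_remove_point g p i0) by (auto; apply Hinc; left; auto).
    replace (Cminus (Cminus (lsum g l) (g i0)) (Cminus S (g i0)))
      with (Cminus (lsum g l) S) by ring.
    apply Hl0; auto. intros i Hi. apply Hinc. right. auto.
Qed.

(* [h] is [g] transported along the bijection [phi] from [J] onto the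
   support [t] of [h], with inverse [psi]. *)
Lemma HasSum_reindex {I J : Type} (g : J -> C) (h : I -> C)
    (phi : J -> I) (psi : I -> J) (t : I -> bool) S :
  (forall j, psi (phi j) = j) ->
  (forall j, t (phi j) = true) ->
  (forall i, t i = true -> phi (psi i) = i) ->
  (forall i, t i = false -> h i = RtoC 0) ->
  (forall j, h (phi j) = g j) ->
  HasSum g S -> HasSum h S.
Proof.
  intros Hpsi Ht Hphi Hsupp Hhg [[M HM] HS].
  assert (Hh : forall i, t i = true -> h i = g (psi i)).
  { intros i Hi. rewrite <- (Hphi i Hi) at 1. apply Hhg. }
  assert (Hnd : forall l, NoDup l -> NoDup (map psi (filter t l))).
  { intros l Hl. apply NoDup_map_NoDup_ForallPairs; [|apply NoDup_filter; auto].
    intros x y Hx Hy E. apply filter_In in Hx, Hy.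
    rewrite <- (Hphi x), <- (Hphi y) by tauto. congruence. }
  split.
  - exists M. intros l Hl.
    rewrite (lsumR_filter _ t) by (intros i Hi; rewrite Hsupp, Cmod_0; auto).
    specialize (HM _ (Hnd l Hl)). rewrite lsumR_map in HM.
    rewrite (lsumR_ext _ (fun i => Cmod (g (psi i)))); auto.
    intros i Hi. apply filter_In in Hi. rewrite Hh; tauto.
  - intros eps Heps. destruct (HS eps Heps) as [l0 Hl0]. exists (map phi l0).
    intros l Hl Hinc.
    rewrite (lsum_filter _ t), (lsum_ext _ (fun i => g (psi i))), <- lsum_map by
      (auto; intros i Hi; apply filter_In in Hi; rewrite Hh; tauto).
    apply Hl0; auto. intros j Hj. rewrite <- (Hpsi j).
    apply in_map, filter_In. split; auto. apply Hinc, in_map, Hj.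
Qed.

Lemma HasSum_drop_zero {J : Type} {P : Prop} (dec : {P} + {~ P})
    (u : J -> Z) (F : J -> C) (x S : C) :
  (forall j j', u j = u j' -> j = j') ->
  (P <-> exists j, u j = 0%Z) ->
  (forall j, u j = 0%Z -> F j = x) ->
  HasSum F S ->
  HasSum (fun j => if (u j =? 0)%Z then RtoC 0 else F j)
         (Cminus S (if dec then x else RtoC 0)).
Proof.
  intros Hu HP HF HS. destruct dec as [Hp|Hnp].
  - destruct (proj1 HP Hp) as [j0 Hj0]. rewrite <- (HF j0 Hj0).
    apply HasSum_remove_point; auto.
    intros j. rewrite Z.eqb_eq. split; [intros Hj; apply Hu; congruence|intros ->; auto].
  - replace (Cminus S (RtoC 0)) with S by ring.
    apply (HasSum_ext F); auto. intros j.
    destruct (u j =? 0)%Z eqn:E; auto.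
    exfalso. apply Hnp, HP. exists j. apply Z.eqb_eq, E.
Qed.

Open Scope Z_scope.

Lemma coprime_det_solutions (c d a0 b0 a b : Z) :
  Z.gcd c d = 1 -> d <> 0 -> a * d - b * c = a0 * d - b0 * c ->
  exists k, a = a0 + k * c /\ b = b0 + k * d.
Proof.
  intros Hcd Hd H.
  assert (Hdiv : (d | c * (b - b0))) by (exists (a - a0); lia).
  apply Z.gauss in Hdiv; [|rewrite Z.gcd_comm; auto].
  destruct Hdiv as [k Hk]. exists k. split; [|lia].
  assert (E : (a - a0) * d = (k * c) * d) by nia.
  apply Z.mul_reg_r in E; lia.
Qed.

Lemma gcd_pos_l (c d : Z) : 0 < c -> 0 < Z.gcd c d.
Proof.
  intros Hc. pose proof (Z.gcd_nonneg c d).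
  destruct (Z.eq_dec (Z.gcd c d) 0) as [E|E]; [|lia].
  apply Z.gcd_eq_0 in E. lia.
Qed.

Definition is_sol (n c d : Z) (p : Z * Z) : bool := fst p * d - snd p * c =? n.

Lemma T_family_nonsol (n c d : Z) f p :
  is_sol n c d p = false -> T_family n c d f p = RtoC 0.
Proof.
  destruct p as [a b]. unfold is_sol, T_family. simpl. intros ->.
  rewrite Bool.andb_false_r. reflexivity.
Qed.

Lemma is_sol_gcd_dvd (n c d : Z) p : is_sol n c d p = true -> (Z.gcd c d | n).
Proof.
  destruct p as [a b]. unfold is_sol. simpl. rewrite Z.eqb_eq. intros <-.
  apply Z.divide_sub_r; apply Z.divide_mul_r;
    [apply Z.gcd_divide_r|apply Z.gcd_divide_l].
Qed.

Section Solutions.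

Variables n c d a0 b0 : Z.
Hypotheses (c_pos : 0 < c) (d_pos : 0 < d) (base_sol : a0 * d - b0 * c = n).

Local Notation g := (Z.gcd c d).
Local Notation c' := (c / Z.gcd c d).
Local Notation d' := (d / Z.gcd c d).

Lemma quot_gcd_mul_l : c' * g = c.
Proof.
  rewrite Z.mul_comm. symmetry.
  apply Zdivide_Zdiv_eq; [apply gcd_pos_l; lia|apply Z.gcd_divide_l].
Qed.

Lemma quot_gcd_mul_r : d' * g = d.
Proof.
  rewrite Z.mul_comm. symmetry.
  apply Zdivide_Zdiv_eq; [apply gcd_pos_l; lia|apply Z.gcd_divide_r].
Qed.

Lemma quot_gcd_pos_l : 0 < c'.
Proof. pose proof quot_gcd_mul_l. pose proof (gcd_pos_l c d c_pos). nia. Qed.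

Lemma quot_gcd_pos_r : 0 < d'.
Proof. pose proof quot_gcd_mul_r. pose proof (gcd_pos_l c d c_pos). nia. Qed.

Definition sol_a (m : Z) : Z := a0 + m * c'.
Definition sol_b (m : Z) : Z := b0 + m * d'.
Definition sol_pair (m : Z) : Z * Z := (sol_a m, sol_b m).
Definition sol_index (p : Z * Z) : Z := (snd p - b0) / d'.

Lemma sol_det m : sol_a m * d - sol_b m * c = n.
Proof.
  rewrite <- base_sol. unfold sol_a, sol_b.
  transitivity (a0 * d - b0 * c + m * (c' * d - c * d')); [ring|].
  rewrite (Zgcd_div_swap0 c d (gcd_pos_l c d c_pos) d_pos). ring.
Qed.

Lemma sol_complete a b : a * d - b * c = n -> exists m, a = sol_a m /\ b = sol_b m.
Proof.
  intros H. apply coprime_det_solutions.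
  - apply Z.gcd_div_gcd; [pose proof (gcd_pos_l c d c_pos); lia|reflexivity].
  - pose proof quot_gcd_pos_r. lia.
  - apply (Z.mul_reg_r _ _ g); [pose proof (gcd_pos_l c d c_pos); lia|].
    rewrite !Z.mul_sub_distr_r, <- !Z.mul_assoc, quot_gcd_mul_l, quot_gcd_mul_r.
    lia.
Qed.

Lemma sol_index_pair m : sol_index (sol_pair m) = m.
Proof.
  unfold sol_index, sol_pair, sol_b. simpl.
  replace (b0 + m * d' - b0) with (m * d') by ring.
  apply Z.div_mul. pose proof quot_gcd_pos_r. lia.
Qed.

Lemma is_sol_pair m : is_sol n c d (sol_pair m) = true.
Proof. apply Z.eqb_eq, sol_det. Qed.

Lemma sol_pair_index p : is_sol n c d p = true -> sol_pair (sol_index p) = p.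
Proof.
  destruct p as [a b]. unfold is_sol. simpl. rewrite Z.eqb_eq. intros H.
  destruct (sol_complete a b H) as [m [-> ->]].
  fold (sol_pair m). rewrite sol_index_pair. reflexivity.
Qed.

Lemma sol_b_mul_c m : sol_b m * c = uv_arg c d b0 m.
Proof.
  unfold sol_b, uv_arg, v_cd.
  rewrite Z.divide_div_mul_exact by
    (try apply Z.gcd_divide_r; pose proof (gcd_pos_l c d c_pos); lia).
  ring.
Qed.

Lemma sol_a_root_iff : (c | n) <-> exists m, sol_a m = 0.
Proof.
  split.
  - intros [q Hq]. destruct (sol_complete 0 (- q)) as [m [Hm _]]; [lia|].
    exists m. auto.
  - intros [m Hm]. exists (- sol_b m). rewrite <- (sol_det m), Hm. ring.
Qed.

Lemma sol_b_root_iff : (d | n) <-> exists m, sol_b m = 0.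
Proof.
  split.
  - intros [q Hq]. destruct (sol_complete q 0) as [m [_ Hm]]; [lia|].
    exists m. auto.
  - intros [m Hm]. exists (sol_a m). rewrite <- (sol_det m), Hm. ring.
Qed.

Definition sol_family (f : Z -> C) (m : Z) : C :=
  if sol_b m =? 0 then RtoC 0
  else if sol_a m =? 0 then RtoC 0
  else M_family c d b0 f m.

Lemma T_family_sol_pair f m : T_family n c d f (sol_pair m) = sol_family f m.
Proof.
  unfold T_family, sol_pair, sol_family.
  rewrite (proj2 (Z.eqb_eq _ _) (sol_det m)), Bool.andb_true_r.
  destruct (sol_a m =? 0), (sol_b m =? 0); try reflexivity.
  unfold M_family. rewrite sol_b_mul_c. reflexivity.
Qed.

Lemma HasSum_sol_family (f : Z -> C) S :
  n <> 0 -> HasSum (M_family c d b0 f) S ->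
  HasSum (sol_family f)
    (Cminus (Cminus S (if Zdivide_dec c n then f (- n) else RtoC 0))
            (if Zdivide_dec d n then f 0 else RtoC 0)).
Proof.
  intros Hn HS.
  assert (Hb_inj : forall m m', sol_b m = sol_b m' -> m = m').
  { unfold sol_b. pose proof quot_gcd_pos_r. nia. }
  assert (Ha_inj : forall m m', sol_a m = sol_a m' -> m = m').
  { unfold sol_a. pose proof quot_gcd_pos_l. nia. }
  apply HasSum_drop_zero; [exact Hb_inj|apply sol_b_root_iff| |].
  - intros m Hm. assert (Ha : sol_a m <> 0) by (pose proof (sol_det m); nia).
    rewrite (proj2 (Z.eqb_neq _ _) Ha).
    unfold M_family. rewrite <- sol_b_mul_c, Hm. reflexivity.
  - apply HasSum_drop_zero; [exact Ha_inj|apply sol_a_root_iff| |exact HS].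
    intros m Hm. unfold M_family. rewrite <- sol_b_mul_c. f_equal.
    pose proof (sol_det m). lia.
Qed.

End Solutions.

Theorem lemma2p4 (n c d : Z) (f : Z -> C) :
  n <> 0%Z -> (0 < c)%Z -> (0 < d)%Z ->
  (~ (Z.gcd c d | n)%Z -> HasSum (T_family n c d f) (RtoC 0)) /\
  ((Z.gcd c d | n)%Z ->
   forall bs : Z, is_bstar n c d bs ->
   forall S : C, HasSum (M_family c d bs f) S ->
   HasSum (T_family n c d f)
     (Cminus (Cminus S (if Zdivide_dec c n then f (- n)%Z else RtoC 0))
             (if Zdivide_dec d n then f 0%Z else RtoC 0))).
Proof.
  intros Hn Hc Hd. split.
  - intros Hndvd. apply HasSum_zero. intros p. apply T_family_nonsol.
    destruct (is_sol n c d p) eqn:E; auto.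
    exfalso. apply Hndvd, (is_sol_gcd_dvd _ _ _ _ E).
  - intros _ bs [[a0 Ha0] _] S HS.
    apply (HasSum_reindex (sol_family c d a0 bs f) _
             (sol_pair c d a0 bs) (sol_index c d bs) (is_sol n c d)).
    + apply sol_index_pair; auto.
    + apply is_sol_pair; auto.
    + apply sol_pair_index; auto.
    + apply T_family_nonsol.
    + apply T_family_sol_pair; auto.
    + apply HasSum_sol_family; auto.
Qed.
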